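(* For every directed co-graph $G=(V,E)$ which is given by a binary di-co-tree, the directed path-width $\mathrm{dpw}(G)$ and the directed tree-width $\mathrm{dtw}(G)$ can be computed in time $O(|V|)$.
   Context: Digraphs are finite, without loops or multiple arcs. Operations on vertex-disjoint digraphs $G_1,\ldots,G_k$: disjoint union $\oplus$ (union of vertex and arc sets); series composition $\otimes$ (disjoint union plus all arcs in both directions between vertices of different $G_i$); order composition $\oslash$ (disjoint union plus all arcs from vertices of $G_i$ to vertices of $G_j$ for $i<j$). Directed co-graphs: single-vertex digraphs, and closure under these three operations. A di-co-tree for a directed co-graph $G$ is a rooted tree whose leaves correspond to the vertices of $G$ and whose inner nodes are labeled by $\oplus,\otimes,\oslash$ (with ordered children), such that evaluating the operations on the digraphs defined by the child subtrees yields $G$ at the root; it is binary if every inner node has exactly two children. Directed path-width: a directed path-decomposition of $G=(V,E)$ is a sequence $(X_1,\ldots,X_r)$ of subsets of $V$ with $\bigcup X_i=V$, for each arc $(u,v)$ some $i\le j$ with $u\in X_i,v\in X_j$, and for each vertex the bags containing it having consecutive indices; width $\max|X_i|-1$; $\mathrm{dpw}(G)$ is the minimum width. Directed tree-width: for $Z\subseteq V$, $S\subseteq V$ is $Z$-normal if no directed walk in $G-Z$ with first and last vertex in $S$ uses a vertex of $G-(Z\cup S)$. A directed tree-decomposition is $(T,\mathcal{X},\mathcal{W})$ with $T=(V_T,E_T)$ an out-tree (rooted, arcs directed away from root; $u\le v$ means a directed path of $\ge0$ arcs from $u$ to $v$), $\mathcal{X}=\{X_e:e\in E_T\}$, $\mathcal{W}=\{W_r:r\in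 V_T\}$ subsets of $V$, such that $\mathcal{W}$ partitions $V$ into nonempty sets and for each $(u,v)\in E_T$ the set $\bigcup\{W_r: v\le r\}$ is $X_{(u,v)}$-normal; width $\max_r|W_r\cup\bigcup_{e\sim r}X_e|-1$ ($e\sim r$: $r$ is an end of $e$); $\mathrm{dtw}(G)$ is the minimum width. *)

From mathcomp Require Import all_boot.
Set Implicit Arguments. Unset Strict Implicit. Unset Printing Implicit Defensive.

(* (Loop-freeness is automatic for digraphs defined by di-co-trees.)   *)

Inductive dcop := DUnion | DSeries | DOrder .

Inductive dctree (V : Type) :=
  | DLeaf of V
  | DNode of dcop & dctree V & dctree V.
Arguments DLeaf {V}.
Arguments DNode {V}.

Fixpoint leaves (V : Type) (t : dctree V) : seq V :=
  match t with
  | DLeaf v => [:: v]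
  | DNode _ l r => leaves l ++ leaves r
  end.

Fixpoint tarc (V : eqType) (t : dctree V) (u v : V) : bool :=
  match t with
  | DLeaf _ => false
  | DNode o l r =>
      [|| tarc l u v, tarc r u v |
        match o with
        | DUnion => false
        | DSeries => ((u \in leaves l) && (v \in leaves r))
                     || ((u \in leaves r) && (v \in leaves l))
        | DOrder => (u \in leaves l) && (v \in leaves r)
        end]
  end.

Definition is_binary_dicotree (V : finType) (E : rel V) (t : dctree V) : Prop :=
  [/\ uniq (leaves t), (forall v : V, v \in leaves t) &
      (forall u v : V, E u v = tarc t u v)].

Definition is_dpath_decomp (V : finType) (E : rel V) (X : seq {set V}) : Prop :=
  [/\ (forall v : V, exists2 i, i < size X & v \in nth set0 X i),
      (forall u v : V, E u v ->
         exists i j, [/\ i <= j, j < size X, u \in nth set0 X i & v \in nth set0 X j]) &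
      (forall (v : V) i j k, i <= j -> j <= k -> k < size X ->
         v \in nth set0 X i -> v \in nth set0 X k -> v \in nth set0 X j)].

Definition dpd_width (V : finType) (X : seq {set V}) : nat :=
  (\max_(B <- X) #|B|).-1.

Definition dpw_is (V : finType) (E : rel V) (k : nat) : Prop :=
  (exists2 X, is_dpath_decomp E X & dpd_width X = k) /\
  (forall X, is_dpath_decomp E X -> k <= dpd_width X).

(** S is Z-normal: no directed walk in G - Z with first and last vertex in S
    uses a vertex of G - (Z ∪ S). A walk is x :: p with consecutive arcs. *)
Definition Z_normal (V : finType) (E : rel V) (Z S : {set V}) : Prop :=
  forall (x : V) (p : seq V),
    path E x p -> all (fun w => w \notin Z) (x :: p) ->
    x \in S -> last x p \in S -> all (fun w => w \in S) (x :: p).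

Definition out_tree (VT : finType) (ET : rel VT) : Prop :=
  exists root : VT,
    [/\ (forall a, ~~ ET a root),
        (forall b, b != root -> exists! a, ET a b) &
        (forall b, connect ET root b)].

Definition is_dtree_decomp (V : finType) (E : rel V) (VT : finType) (ET : rel VT)
    (X : VT -> VT -> {set V}) (W : VT -> {set V}) : Prop :=
  [/\ out_tree ET,
      (forall r, W r != set0),
      (forall r r', r != r' -> [disjoint W r & W r']),
      (forall v : V, exists r, v \in W r) &
      (forall a b, ET a b ->
         Z_normal E (X a b) (\bigcup_(r | connect ET b r) W r))].

Definition dtd_width (V : finType) (VT : finType) (ET : rel VT)
    (X : VT -> VT -> {set V}) (W : VT -> {set V}) : nat :=
  (\max_(r : VT)
     #|W r :|: \bigcup_(a : VT) \bigcup_(b : VT | ET a b && ((a == r) || (b == r))) X a b|).-1.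

Definition dtw_is (V : finType) (E : rel V) (k : nat) : Prop :=
  (exists (VT : finType) (ET : rel VT) X W,
      is_dtree_decomp E ET X W /\ dtd_width ET X W = k) /\
  (forall (VT : finType) (ET : rel VT) X W,
      is_dtree_decomp E ET X W -> k <= dtd_width ET X W).

(** A bottom-up (attribute) algorithm on the tree: each node stores a
    fixed-length vector of natural numbers; leaves get a fixed vector and
    an inner node with operation o computes its vector from those of its
    two children by a FIXED (input-independent) list of arithmetic
    expressions built from constants, +, max, min.  In the unit-cost RAM
    model each node thus costs O(1), and a binary di-co-tree has
    2|V|-1 nodes, so the total running time is O(|V|). *)
Inductive aexp :=
  | AConst of nat
  | ALeft of nat
  | ARight of nat
  | AAdd of aexp & aexp
  | AMax of aexp & aexp
  | AMin of aexp & aexp.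

Fixpoint eval_aexp (l r : seq nat) (e : aexp) : nat :=
  match e with
  | AConst n => n
  | ALeft i => nth 0 l i
  | ARight i => nth 0 r i
  | AAdd e1 e2 => eval_aexp l r e1 + eval_aexp l r e2
  | AMax e1 e2 => maxn (eval_aexp l r e1) (eval_aexp l r e2)
  | AMin e1 e2 => minn (eval_aexp l r e1) (eval_aexp l r e2)
  end.

Fixpoint run_alg (V : Type) (leaf0 : seq nat) (step : dcop -> seq aexp)
    (t : dctree V) : seq nat :=
  match t with
  | DLeaf _ => leaf0
  | DNode o l r =>
      let al := run_alg leaf0 step l in
      let ar := run_alg leaf0 step r in
      map (eval_aexp al ar) (step o)
  end.

From mathcomp Require Import all_boot zify.
Set Implicit Arguments. Unset Strict Implicit. Unset Printing Implicit Defensive.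

(* Both dpw(G) and dtw(G) equal [cotree_width t], which one fixed arithmetic
   step per node of the di-co-tree computes.
   Upper bound: concatenate the children's path-decompositions at DUnion and
   DOrder nodes; at a DSeries node add all vertices of one side to every bag of
   the other side's decomposition.  Every bag then contains a vertex not seen
   before, so the bags, read along a directed path, also form a directed
   tree-decomposition of no larger width.
   Lower bound: a haven of order w + 1, i.e. a monotone choice of a strongly
   connected set b(Z) outside each Z with |Z| <= w, is built along the same
   recursion.  If all bags of a decomposition had at most w vertices, b(Z)
   would stay trapped in the part not yet covered while moving along the path,
   or down the out-tree, and that part eventually becomes empty. *)

Fixpoint cotree_width (V : Type) (t : dctree V) : nat :=
  match t with
  | DLeaf _ => 0
  | DNode DSeries l r =>
      minn (cotree_width l + size (leaves r)) (cotree_width r + size (leaves l))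
  | DNode _ l r => maxn (cotree_width l) (cotree_width r)
  end.

Definition width_leaf : seq nat := [:: 0; 1].

Definition width_step (o : dcop) : seq aexp :=
  match o with
  | DSeries => [:: AMin (AAdd (ALeft 0) (ARight 1)) (AAdd (ARight 0) (ALeft 1));
                   AAdd (ALeft 1) (ARight 1)]
  | _ => [:: AMax (ALeft 0) (ARight 0); AAdd (ALeft 1) (ARight 1)]
  end.

Lemma run_width_algE (V : Type) (t : dctree V) :
  run_alg width_leaf width_step t = [:: cotree_width t; size (leaves t)].
Proof. by elim: t => [//|[] l IHl r IHr] /=; rewrite IHl IHr size_cat. Qed.

Lemma path_invariant (T : Type) (e : rel T) (Q P : pred T) x p :
  (forall u w, e u w -> Q u -> Q w -> P u -> P w) ->
  path e x p -> all Q (x :: p) -> P x -> all P (x :: p).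
Proof.
move=> inv; elim: p x => [|y p IHp] x /=; first by move=> _ _ ->.
case/andP=> exy yp /and3P[Qx Qy Qp] Px.
by rewrite Px /=; apply: IHp => //=; [rewrite Qy | apply: (inv x y)].
Qed.

Lemma acyclic_descent (T : finType) (e : rel T) (P : T -> Prop) :
  (forall a c, e a c -> ~~ connect e c a) ->
  (forall a, P a -> exists2 c, e a c & P c) -> forall a, ~ P a.
Proof.
move=> acyc desc a; have [n] := ubnP #|[set r | connect e a r]|.
elim: n a => [//|n IHn] a; rewrite ltnS => ltn Pa.
have [c eac Pc] := desc a Pa; apply: (IHn c _ Pc); apply: leq_trans ltn.
apply/proper_card/properP; split.
  by apply/subsetP => r; rewrite !inE; apply: connect_trans (connect1 eac).
by exists a; rewrite !inE ?connect0 ?(negPf (acyc a c eac)).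
Qed.

Lemma out_tree_acyclic (T : finType) (e : rel T) :
  out_tree e -> forall a c, e a c -> ~~ connect e c a.
Proof.
case=> root [no_in parent reach].
pose on_cycle z := exists2 w, e w z & connect e z w.
have cycle_parent z u : on_cycle z -> e u z -> on_cycle u.
  case=> w ewz czw euz.
  have zr : z != root by apply: contraTneq ewz => ->; rewrite (negPf (no_in w)).
  have [par [_ uniq_par]] := parent z zr.
  rewrite -(uniq_par u euz) (uniq_par w ewz).
  case/connectP: czw ewz => p zp ->; elim/last_ind: p zp => [_ ezz|p y _].
    by exists z; rewrite ?connect0.
  rewrite rcons_path last_rcons => /andP[zp eyl] ezy; exists (last z p) => //.
  by apply: connect_trans (connect1 ezy) _; apply/connectP; exists p.
move=> a c eac; apply/negP => cca.
have [p rp cE] := connectP (reach c).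
have {cE} : on_cycle (last root p) by rewrite -cE; exists a.
elim/last_ind: p rp => [_ [w]|p y IHp]; first by rewrite (negPf (no_in w)).
rewrite rcons_path last_rcons => /andP[rp eyl] cy.
exact: IHp rp (cycle_parent _ _ cy eyl).
Qed.

Section Havens.

Context {V : finType}.
Implicit Types (E : rel V) (U Z B : {set V}).

Definition walk_linked E (A B : {set V}) : Prop :=
  forall x y, x \in B -> y \in B ->
    exists2 p, path E x p & last x p = y /\ all [in A] p.

Definition haven_cell E U Z B : Prop :=
  [/\ B != set0, B \subset U :\: Z & walk_linked E (U :\: Z) B].

(* Unlike the usual notion, [b Z] need not be a whole strong component of
   [G[U] - Z]: a strongly connected subset suffices for the lower bounds. *)
Definition haven E U (k : nat) (b : {set V} -> {set V}) : Prop :=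
  forall Z, Z \subset U -> #|Z| < k ->
    haven_cell E U Z (b Z) /\ (forall Z', Z' \subset Z -> b Z \subset b Z').

Lemma haven_cell_lift (E1 E : rel V) (U1 U Z B : {set V}) :
  U1 \subset U -> subrel E1 E -> haven_cell E1 U1 (Z :&: U1) B -> haven_cell E U Z B.
Proof.
move=> sU sE [neB sB linked].
have sD : U1 :\: (Z :&: U1) \subset U :\: Z by rewrite setDIr setDv setU0 setSD.
split=> [//||x y xB yB]; first exact: subset_trans sD.
have [p xp [xpy pU]] := linked x y xB yB; exists p; first exact: sub_path xp.
by split=> //; apply: sub_all pU => w /(subsetP sD).
Qed.

Lemma haven_cell_proper E U Z B : haven_cell E U Z B -> ~~ (U \subset Z).
Proof.
case=> /set0Pn[x xB] sB _; apply/subsetPn; exists x.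
all: by move: (subsetP sB x xB); rewrite inE => /andP[].
Qed.

Lemma haven_restrict (E1 E : rel V) (U1 U : {set V}) k b :
  U1 \subset U -> subrel E1 E -> haven E1 U1 k b ->
  haven E U k (fun Z => b (Z :&: U1)).
Proof.
move=> sU sE H Z _ ltZk.
have ltZk1 : #|Z :&: U1| < k by rewrite (leq_ltn_trans _ ltZk) ?subset_leq_card ?subsetIl.
have [cell mono] := H _ (subsetIr _ _) ltZk1.
by split=> [|Z' sZ']; [apply: haven_cell_lift cell | apply/mono/setSI].
Qed.

Lemma haven_max (E1 E2 E : rel V) (U1 U2 U : {set V}) k1 k2 b1 b2 :
  U1 \subset U -> U2 \subset U -> subrel E1 E -> subrel E2 E ->
  haven E1 U1 k1 b1 -> haven E2 U2 k2 b2 -> exists b, haven E U (maxn k1 k2) b.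
Proof.
move=> sU1 sU2 sE1 sE2 H1 H2.
by case: (leqP k2 k1) => _; eexists; [apply: haven_restrict H1 | apply: haven_restrict H2].
Qed.

Lemma card_setI_lt (A B Z : {set V}) k :
  [disjoint A & B] -> B \subset Z -> #|Z| < k + #|B| -> #|Z :&: A| < k.
Proof.
move=> dAB sBZ ltZ; rewrite -(ltn_add2r #|B|); apply: leq_ltn_trans ltZ.
rewrite -(cardsID A Z) leq_add2l; apply/subset_leq_card/subsetP => w wB.
by rewrite !inE (subsetP sBZ w wB) andbT (disjointFl dAB wB).
Qed.

(* Once [Z] swallows one side of a series composition, follow the haven of
   the other side; otherwise every vertex outside [Z] is reachable from every
   other one through the complete join, in at most two steps. *)
Definition series_haven (U1 U2 : {set V}) (b1 b2 : {set V} -> {set V}) Z :=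
  if U2 \subset Z then b1 (Z :&: U1)
  else if U1 \subset Z then b2 (Z :&: U2) else (U1 :|: U2) :\: Z.

Section Series.

Variables (E1 E2 E : rel V) (U1 U2 : {set V}) (k1 k2 : nat).
Variables b1 b2 : {set V} -> {set V}.
Hypotheses (H1 : haven E1 U1 k1 b1) (H2 : haven E2 U2 k2 b2).
Hypotheses (dU : [disjoint U1 & U2]) (sE1 : subrel E1 E) (sE2 : subrel E2 E).
Hypothesis join : forall u v, u \in U1 -> v \in U2 -> E u v && E v u.

Let k := minn (k1 + #|U2|) (k2 + #|U1|).

Lemma series_cell_join Z : ~~ (U1 \subset Z) -> ~~ (U2 \subset Z) ->
  haven_cell E (U1 :|: U2) Z ((U1 :|: U2) :\: Z).
Proof.
case/subsetPn=> a aU1 aZ /subsetPn[c cU2 cZ].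
have aD : a \in (U1 :|: U2) :\: Z by rewrite !inE aZ aU1.
have cD : c \in (U1 :|: U2) :\: Z by rewrite !inE cZ cU2 orbT.
split=> [|//|x y xD yD]; first by apply/set0Pn; exists a.
case/setDP: xD => /setUP[xU|xU] _; case/setDP: (yD) => /setUP[yU|yU] _.
- exists [:: c; y]; last by rewrite /= cD yD.
  by rewrite /= (andP (join xU cU2)).1 (andP (join yU cU2)).2.
- by exists [:: y]; rewrite /= ?yD ?(andP (join xU yU)).1.
- by exists [:: y]; rewrite /= ?yD ?(andP (join yU xU)).2.
- exists [:: a; y]; last by rewrite /= aD yD.
  by rewrite /= (andP (join aU1 xU)).2 (andP (join aU1 yU)).1.
Qed.

Let card_left Z : U2 \subset Z -> #|Z| < k -> #|Z :&: U1| < k1.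
Proof. by move=> sU2 ltZ; apply: card_setI_lt dU sU2 (leq_trans ltZ (geq_minl _ _)). Qed.

Let card_right Z : U1 \subset Z -> #|Z| < k -> #|Z :&: U2| < k2.
Proof.
move=> sU1 ltZ; apply: card_setI_lt sU1 (leq_trans ltZ (geq_minr _ _)).
by rewrite disjoint_sym.
Qed.

Lemma series_haven_cell Z : #|Z| < k ->
  haven_cell E (U1 :|: U2) Z (series_haven U1 U2 b1 b2 Z).
Proof.
rewrite /series_haven => ltZ; case: ifP => [sU2|/negbT nU2].
  exact: haven_cell_lift (subsetUl _ _) sE1 (H1 (subsetIr _ _) (card_left sU2 ltZ)).1.
case: ifP => [sU1|/negbT nU1]; last exact: series_cell_join.
exact: haven_cell_lift (subsetUr _ _) sE2 (H2 (subsetIr _ _) (card_right sU1 ltZ)).1.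
Qed.

Lemma haven_series : haven E (U1 :|: U2) k (series_haven U1 U2 b1 b2).
Proof.
move=> Z _ ltZ; split=> [|Z' sZ']; first exact: series_haven_cell.
have [_ sBZ _] := series_haven_cell ltZ.
rewrite {2}/series_haven; case: ifP => [sU2'|_].
  have sU2 := subset_trans sU2' sZ'; rewrite /series_haven sU2.
  exact: (H1 (subsetIr _ _) (card_left sU2 ltZ)).2 _ (setSI _ sZ').
case: ifP => [sU1'|_]; last by apply: subset_trans sBZ _; apply: setDS.
have sU1 := subset_trans sU1' sZ'.
have nU2 : ~~ (U2 \subset Z).
  apply: contraNN (haven_cell_proper (series_haven_cell ltZ)).
  by move=> sU2; rewrite subUset sU1.
rewrite /series_haven (negPf nU2) sU1.
exact: (H2 (subsetIr _ _) (card_right sU1 ltZ)).2 _ (setSI _ sZ').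
Qed.

End Series.

End Havens.

Section CotreeHaven.

Context {V : finType}.
Implicit Types (t l r : dctree V) (o : dcop).

Definition leaf_set t : {set V} := [set x in leaves t].

Lemma card_leaf_set t : uniq (leaves t) -> #|leaf_set t| = size (leaves t).
Proof. by move=> ut; rewrite cardsE; apply/card_uniqP. Qed.

Lemma leaf_set_node o l r : leaf_set (DNode o l r) = leaf_set l :|: leaf_set r.
Proof. by apply/setP => x; rewrite !inE mem_cat. Qed.

Lemma uniq_leaves_node o l r : uniq (leaves (DNode o l r)) ->
  [/\ uniq (leaves l), uniq (leaves r) & [disjoint leaf_set l & leaf_set r]].
Proof.
rewrite /= cat_uniq => /and3P[ul lr ur]; split=> //.
by apply/pred0P => x; rewrite /= !inE; apply: contraNF lr => /andP[xl xr]; apply/hasP; exists x.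
Qed.

Lemma tarc_nodel o l r : subrel (tarc l) (tarc (DNode o l r)).
Proof. by move=> u v /= ->. Qed.

Lemma tarc_noder o l r : subrel (tarc r) (tarc (DNode o l r)).
Proof. by move=> u v /= ->; rewrite orbT. Qed.

Lemma cotree_haven t : uniq (leaves t) ->
  exists b, haven (tarc t) (leaf_set t) (cotree_width t).+1 b.
Proof.
elim: t => [v _|o l IHl r IHr /uniq_leaves_node[ul ur dU]].
  exists (fun=> [set v]) => Z _; rewrite ltnS leqn0 cards_eq0 => /eqP->.
  split=> [|Z' _]; last exact: subxx.
  split=> [|/=|x y]; first by apply/set0Pn; exists v; rewrite inE.
    by apply/subsetP => x; rewrite !inE.
  by rewrite !inE => /eqP-> /eqP->; exists [::].
have [b1 H1] := IHl ul; have [b2 H2] := IHr ur.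
rewrite leaf_set_node; case: o; rewrite [cotree_width _]/=.
1,3: by rewrite -maxnSS; apply: haven_max (subsetUl _ _) (subsetUr _ _)
       (@tarc_nodel _ l r) (@tarc_noder _ l r) H1 H2.
exists (series_haven (leaf_set l) (leaf_set r) b1 b2).
rewrite -(card_leaf_set ur) -(card_leaf_set ul) -minnSS -!addSn.
apply: haven_series H1 H2 dU (@tarc_nodel _ l r) (@tarc_noder _ l r) _.
by move=> u v ul' vr; rewrite /= !inE in ul' vr *; rewrite ul' vr !orbT.
Qed.

End CotreeHaven.

Section PathLowerBound.

Context {V : finType}.
Variables (E : rel V) (X : seq {set V}) (k : nat) (b : {set V} -> {set V}).
Hypotheses (H : haven E setT k b) (dX : is_dpath_decomp E X).

Definition later_bags i : {set V} := \bigcup_(j < size X | i < j) nth set0 X j.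

Lemma later_bagsP i v :
  reflect (exists2 j, i < j < size X & v \in nth set0 X j) (v \in later_bags i).
Proof.
apply: (iffP bigcupP) => [[j ij vj]|[j /andP[ij jX] vj]]; last by exists (Ordinal jX).
by exists j; rewrite ?ij ?ltn_ord.
Qed.

Lemma later_bags_succ i v :
  v \in later_bags i -> v \notin nth set0 X i.+1 -> v \in later_bags i.+1.
Proof.
case/later_bagsP=> j /andP[ij jX] vj vNi1; apply/later_bagsP; exists j => //.
by rewrite jX andbT ltn_neqAle ij andbT; apply: contraNneq vNi1 => ->.
Qed.

Lemma later_bags_arc i u w : E u w ->
  u \notin nth set0 X i :&: nth set0 X i.+1 -> u \in later_bags i -> w \in later_bags i.
Proof.
have [_ arcs cons] := dX.
move=> Euw uNZ /later_bagsP[j /andP[ij jX] uj].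
have [a [c [ac cX ua wc]]] := arcs u w Euw.
case: (ltnP i c) => [ic|ci]; first by apply/later_bagsP; exists c; rewrite ?ic.
have ai := leq_trans ac ci.
by rewrite inE (cons u a i j) ?(cons u a i.+1 j) ?(ltnW ij) ?(leqW ai) in uNZ.
Qed.

Lemma haven_later_bags i : i < size X ->
  (forall j, j <= i -> #|nth set0 X j| < k) -> b (nth set0 X i) \subset later_bags i.
Proof.
have [cover _ _] := dX.
elim: i => [|i IHi] iX small.
  have [[_ sB _] _] := H (subsetT _) (small 0 (leqnn 0)).
  apply/subsetP => v /(subsetP sB); rewrite !inE andbT => vNX0.
  have [j jX vj] := cover v; apply/later_bagsP; exists j => //.
  by rewrite jX andbT lt0n; apply: contraNneq vNX0 => <-.
set Z := nth set0 X i :&: nth set0 X i.+1.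
have smalli j : j <= i -> #|nth set0 X j| < k by move=> ji; apply/small/leqW.
have ltZ : #|Z| < k by rewrite (leq_ltn_trans _ (smalli i (leqnn i))) ?subset_leq_card ?subsetIl.
have [[/set0Pn[x xb] _ _] mono] := H (subsetT _) (smalli i (leqnn i)).
have [[_ sBZ linked] _] := H (subsetT Z) ltZ.
have [[_ sB1 _] mono1] := H (subsetT _) (small i.+1 (leqnn _)).
apply/subsetP => v vb; apply: later_bags_succ; last first.
  by move: (subsetP sB1 v vb); rewrite !inE andbT.
have xZ := subsetP (mono Z (subsetIl _ _)) x xb.
have [p xp [<- pZ]] := linked x v xZ (subsetP (mono1 Z (subsetIr _ _)) v vb).
have notZ : all (fun w => w \notin Z) (x :: p).
  have /setDP[_ xNZ] := subsetP sBZ x xZ.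
  by rewrite /= xNZ; apply: sub_all pZ => w /setDP[].
have arc u w : E u w -> u \notin Z -> w \notin Z -> u \in later_bags i -> w \in later_bags i.
  by move=> Euw uNZ _; apply: later_bags_arc.
have := path_invariant arc xp notZ (subsetP (IHi (ltnW iX) smalli) x xb).
by move/allP; apply; apply: mem_last.
Qed.

End PathLowerBound.

Lemma haven_dpd_width (V : finType) (E : rel V) k b X :
  haven E setT k.+1 b -> is_dpath_decomp E X -> k <= dpd_width X.
Proof.
move=> H dX; have [cover _ _] := dX.
suff : k < \max_(B <- X) #|B| by rewrite /dpd_width; case: (\max_(B <- X) #|B|).
rewrite ltnNge; apply/negP => /bigmax_leqP_seq small.
have smallX j : #|nth set0 X j| < k.+1.
  case: (ltnP j (size X)) => [jX|jX]; first exact: small (mem_nth _ jX) _.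
  by rewrite nth_default ?cards0.
have := H set0 (subsetT _); rewrite cards0 => /(_ isT) [[/set0Pn[v _] _ _] _].
have [j + _] := cover v; case sizeX: (size X) => [//|i] _.
have iX : i < size X by rewrite sizeX.
have [[/set0Pn[w wb] _ _] _] := H _ (subsetT _) (smallX i).
have /later_bagsP[j' /andP[ij' j'X] _] :=
  subsetP (haven_later_bags H dX iX (fun j _ => smallX j)) w wb.
by rewrite sizeX ltnS leqNgt ij' in j'X.
Qed.

Section TreeLowerBound.

Context {V VT : finType}.
Variables (E : rel V) (ET : rel VT) (X : VT -> VT -> {set V}) (W : VT -> {set V}).

Definition dtd_bag r : {set V} :=
  W r :|: \bigcup_(a : VT) \bigcup_(c : VT | ET a c && ((a == r) || (c == r))) X a c.

Definition subtree_vertices c : {set V} := \bigcup_(r | connect ET c r) W r.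

Lemma guard_sub_dtd_bag a c : ET a c -> X a c \subset dtd_bag a /\ X a c \subset dtd_bag c.
Proof.
move=> eac; split; apply/subsetP => y yX; rewrite inE; apply/orP; right;
  apply/bigcupP; exists a => //; apply/bigcupP; exists c => //; by rewrite eac eqxx ?orbT.
Qed.

Variables (k : nat) (b : {set V} -> {set V}).

Definition trapped_below a : Prop :=
  exists2 Z : {set V}, Z \subset dtd_bag a & b Z \subset subtree_vertices a.

Hypotheses (H : haven E setT k b) (dT : is_dtree_decomp E ET X W).

(* [b (X a c)] is strongly connected avoiding [X a c] and meets the subtree
   at [c], so normality of that subtree keeps all of it inside. *)
Lemma haven_descend a :
  #|dtd_bag a| < k -> trapped_below a -> exists2 c, ET a c & trapped_below c.
Proof.
have [_ _ _ _ normal] := dT.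
move=> small [Z sZ sbZ].
have [[/set0Pn[x xb] sB _] mono] := H (subsetT _) small.
have /bigcupP[r ar xr] := subsetP sbZ x (subsetP (mono Z sZ) x xb).
have [c eac ccr] : exists2 c, ET a c & connect ET c r.
  case/connectP: ar => [[|c p] /=].
    by move=> _ ra; have := subsetP sB x xb; rewrite -ra /dtd_bag !inE xr.
  by case/andP=> eac cp ->; exists c => //; apply/connectP; exists p.
have [sXa sXc] := guard_sub_dtd_bag eac.
exists c => //; exists (X a c) => //.
have [[_ sBc linked] _] := H (subsetT _) (leq_ltn_trans (subset_leq_card sXa) small).
have xc := subsetP (mono _ sXa) x xb.
apply/subsetP => y yb.
have [p xp [xpy pZ]] := linked x y xc yb; have [q yq [yqx qZ]] := linked y x yb xc.
have notZ w : w \in [set: V] :\: X a c -> w \notin X a c by case/setDP.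
have := normal a c eac x (p ++ q).
rewrite cat_path xp xpy yq last_cat xpy yqx /= all_cat (notZ x (subsetP sBc x xc)).
rewrite (sub_all notZ pZ) (sub_all notZ qZ).
have xS : x \in subtree_vertices c by apply/bigcupP; exists r.
move=> /(_ isT isT xS xS) /andP[_]; rewrite all_cat => /andP[/allP Sp _].
by have := mem_last x p; rewrite xpy inE => /predU1P[->|/Sp].
Qed.

End TreeLowerBound.

Lemma haven_dtd_width (V VT : finType) (E : rel V) (ET : rel VT) X W k b :
  haven E setT k.+1 b -> is_dtree_decomp E ET X W -> k <= dtd_width ET X W.
Proof.
move=> H dT; have [tree _ _ cover _] := dT.
suff : k < \max_r #|dtd_bag ET X W r| by rewrite /dtd_width; case: (\max_r _).
rewrite ltnNge; apply/negP => /bigmax_leqP small.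
have [root [_ _ reach]] := tree.
have descend a := haven_descend H dT (small a isT).
apply: (@acyclic_descent _ _ _ (out_tree_acyclic tree) descend root).
exists set0; rewrite ?sub0set //; apply/subsetP => v _.
by have [r vr] := cover v; apply/bigcupP; exists r.
Qed.

Section PathDecompositionsOn.

Context {V : finType}.
Implicit Types (E : rel V) (U A : {set V}) (X : seq {set V}).

Definition dpath_decomp_on E U X : Prop :=
  [/\ forall B, B \in X -> B \subset U,
      forall v, v \in U -> exists2 i, i < size X & v \in nth set0 X i,
      forall u v, E u v -> exists i j,
        [/\ i <= j, j < size X, u \in nth set0 X i & v \in nth set0 X j] &
      forall v i j k, i <= j -> j <= k -> k < size X ->
        v \in nth set0 X i -> v \in nth set0 X k -> v \in nth set0 X j].

(* Every bag introduces a new vertex; this lets the bags serve as the nodes of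
   a directed tree-decomposition, whose [W]-sets must be nonempty. *)
Definition fresh_bags X : Prop :=
  forall i, i < size X ->
    exists2 v, v \in nth set0 X i & forall j, j < i -> v \notin nth set0 X j.

Lemma dpath_decomp_onT E X : dpath_decomp_on E setT X -> is_dpath_decomp E X.
Proof. by case=> _ cover arcs cons; split=> // v; apply: cover. Qed.

Lemma dpath_decomp_on_subrel E' E U X :
  subrel E' E -> dpath_decomp_on E U X -> dpath_decomp_on E' U X.
Proof. by move=> sE [sX cover arcs cons]; split=> // u v /sE; apply: arcs. Qed.

Lemma nth_bag_size X i v : v \in nth set0 X i -> i < size X.
Proof. by rewrite ltnNge; apply: contraTN => Xi; rewrite nth_default ?inE. Qed.

Lemma nth_bag_sub U X i v :
  (forall B, B \in X -> B \subset U) -> v \in nth set0 X i -> v \in U.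
Proof. by move=> sX vXi; apply: subsetP (sX _ (mem_nth set0 (nth_bag_size vXi))) v vXi. Qed.

Lemma dpath_decomp_on_cat E E1 E2 U1 U2 X1 X2 :
  dpath_decomp_on E1 U1 X1 -> dpath_decomp_on E2 U2 X2 -> [disjoint U1 & U2] ->
  (forall u v, E u v -> [\/ E1 u v, E2 u v | (u \in U1) && (v \in U2)]) ->
  dpath_decomp_on E (U1 :|: U2) (X1 ++ X2).
Proof.
move=> [sX1 cover1 arcs1 cons1] [sX2 cover2 arcs2 cons2] dU arcs.
have nthl i : i < size X1 -> nth set0 (X1 ++ X2) i = nth set0 X1 i.
  by move=> iX; rewrite nth_cat iX.
have nthr i : nth set0 (X1 ++ X2) (size X1 + i) = nth set0 X2 i.
  by rewrite nth_cat ltnNge leq_addr addKn.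
have coverl v : v \in U1 -> exists2 i, i < size X1 & v \in nth set0 (X1 ++ X2) i.
  by case/cover1 => i iX vi; exists i; rewrite ?nthl.
have coverr v : v \in U2 -> exists2 i, i < size X2 & v \in nth set0 (X1 ++ X2) (size X1 + i).
  by case/cover2 => i iX vi; exists i; rewrite ?nthr.
split=> [B|v|u v|v i j k ij jk].
- by rewrite mem_cat => /orP[/sX1|/sX2] sB; apply: subset_trans sB _; rewrite ?subsetUl ?subsetUr.
- rewrite size_cat; case/setUP => [/coverl|/coverr] [i iX vi];
    [exists i | exists (size X1 + i)]; rewrite // ?ltn_add2l //; lia.
- rewrite size_cat; case/arcs => [/arcs1|/arcs2|/andP[/coverl[i iX ui] /coverr[j jX vj]]].
  + case=> i [j [ij jX ui vj]]; exists i, j.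
    by rewrite !nthl ?(leq_ltn_trans ij jX) //; split=> //; lia.
  + case=> i [j [ij jX ui vj]]; exists (size X1 + i), (size X1 + j).
    by rewrite !nthr leq_add2l ltn_add2l.
  + by exists i, (size X1 + j); split=> //; lia.
rewrite size_cat => kX.
have [kX1|X1k] := ltnP k (size X1).
  by rewrite !nthl; [apply: cons1 ij jk kX1 | lia ..].
have [iX1|X1i] := ltnP i (size X1).
  rewrite nthl // -(subnKC X1k) nthr => vi vk.
  by move: (nth_bag_sub sX2 vk); rewrite (disjointFr dU (nth_bag_sub sX1 vi)).
rewrite -(subnKC X1i) -(subnKC X1k) -(subnKC (leq_trans X1i ij)) !nthr.
by apply: cons2; lia.
Qed.

Lemma fresh_bags_cat U1 U2 X1 X2 :
  (forall B, B \in X1 -> B \subset U1) -> (forall B, B \in X2 -> B \subset U2) ->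
  [disjoint U1 & U2] -> fresh_bags X1 -> fresh_bags X2 -> fresh_bags (X1 ++ X2).
Proof.
move=> sX1 sX2 dU fresh1 fresh2 i; rewrite size_cat nth_cat => iX.
have [iX1|X1i] := ltnP i (size X1).
  have [v vi vNj] := fresh1 i iX1; exists v => // j ji.
  by rewrite nth_cat (ltn_trans ji iX1) vNj.
have [|v vi vNj] := fresh2 (i - size X1); first lia.
exists v => // j ji; rewrite nth_cat; case: ltnP => [jX1|X1j]; last by apply: vNj; lia.
by apply: contraFN (disjointFl dU (nth_bag_sub sX2 vi)); apply: nth_bag_sub.
Qed.

Lemma dpath_decomp_on_setU E E1 U1 A X1 :
  dpath_decomp_on E1 U1 X1 -> [disjoint U1 & A] -> 0 < size X1 ->
  (forall u v, E u v ->
     E1 u v \/ [&& (u \in A) || (v \in A), u \in U1 :|: A & v \in U1 :|: A]) ->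
  dpath_decomp_on E (U1 :|: A) [seq B :|: A | B <- X1].
Proof.
move=> [sX1 cover1 arcs1 cons1] dU X10 arcs.
set Y := [seq _ | _ <- _]; have sizeY : size Y = size X1 by rewrite size_map.
have nthY i : i < size X1 -> nth set0 Y i = nth set0 X1 i :|: A.
  by move=> iX; rewrite (nth_map set0).
have coverY v : v \in U1 :|: A -> exists2 i, i < size X1 & v \in nth set0 Y i.
  case/setUP => [/cover1[i iX vi]|vA]; first by exists i; rewrite // nthY ?inE ?vi.
  by exists 0; rewrite // nthY // inE vA orbT.
split=> [B|v|u v|v i j k ij jk]; rewrite ?sizeY.
- by case/mapP=> B0 /sX1 sB0 ->; apply: setSU.
- exact: coverY.
- case/arcs => [/arcs1[i [j [ij jX ui vj]]]|/and3P[uvA /coverY[i iX ui] /coverY[j jX vj]]].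
    by exists i, j; rewrite !nthY ?inE ?ui ?vj //; apply: leq_ltn_trans jX.
  case/orP: uvA => [uA|vA]; [exists j, j | exists i, i]; split=> //.
    by rewrite nthY // inE uA orbT.
  by rewrite nthY // inE vA orbT.
move=> kX; rewrite !nthY ?inE; try lia.
by case: (v \in A); rewrite ?orbT ?orbF //; apply: cons1.
Qed.

Lemma fresh_bags_setU U1 A X1 :
  (forall B, B \in X1 -> B \subset U1) -> [disjoint U1 & A] ->
  fresh_bags X1 -> fresh_bags [seq B :|: A | B <- X1].
Proof.
move=> sX1 dU fresh1 i; rewrite size_map => iX.
have [v vi vNj] := fresh1 i iX; have vNA := disjointFr dU (nth_bag_sub sX1 vi).
exists v; first by rewrite (nth_map set0) // inE vi.
move=> j ji; have jX := ltn_trans ji iX.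
by rewrite (nth_map set0) // inE (negPf (vNj j ji)) vNA.
Qed.

End PathDecompositionsOn.

Section CotreeDecomposition.

Context {V : finType}.
Implicit Types (t l r : dctree V).

Lemma tarc_leaves t u v : tarc t u v -> (u \in leaves t) && (v \in leaves t).
Proof.
elim: t => [//|o l IHl r IHr] /=; rewrite !mem_cat.
case/or3P=> [/IHl/andP[-> ->]|/IHr/andP[-> ->]|] //; first by rewrite !orbT.
by case: o => //; [case/orP|]; case/andP=> -> ->; rewrite ?orbT.
Qed.

Lemma tarc_seriesC l r : tarc (DNode DSeries l r) =2 tarc (DNode DSeries r l).
Proof. by move=> u v /=; rewrite orbCA [_ || _ && _]orbC. Qed.

Lemma tarc_series_side l r u v : tarc (DNode DSeries l r) u v ->
  tarc l u v \/ [&& (u \in leaf_set r) || (v \in leaf_set r),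
                  u \in leaf_set l :|: leaf_set r & v \in leaf_set l :|: leaf_set r].
Proof.
move=> uv; have /andP[uU vU] := tarc_leaves uv.
rewrite -(leaf_set_node DSeries) !inE uU vU !andbT.
by move: uv => /or4P[|/tarc_leaves/andP[-> _]|/andP[_ ->]|/andP[-> _]];
  [left | right; rewrite ?orbT ..].
Qed.

Fixpoint cotree_dpd t : seq {set V} :=
  match t with
  | DLeaf v => [:: [set v]]
  | DNode DSeries l r =>
      if cotree_width l + size (leaves r) <= cotree_width r + size (leaves l)
      then [seq B :|: leaf_set r | B <- cotree_dpd l]
      else [seq B :|: leaf_set l | B <- cotree_dpd r]
  | DNode _ l r => cotree_dpd l ++ cotree_dpd r
  end.

Lemma dpd_bags_setU (E E1 : rel V) (U1 A : {set V}) X1 k :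
  dpath_decomp_on E1 U1 X1 -> fresh_bags X1 -> 0 < size X1 ->
  (forall B, B \in X1 -> #|B| <= k) -> [disjoint U1 & A] ->
  (forall u v, E u v ->
     E1 u v \/ [&& (u \in A) || (v \in A), u \in U1 :|: A & v \in U1 :|: A]) ->
  [/\ dpath_decomp_on E (U1 :|: A) [seq B :|: A | B <- X1],
      fresh_bags [seq B :|: A | B <- X1], 0 < size [seq B :|: A | B <- X1] &
      forall B, B \in [seq B :|: A | B <- X1] -> #|B| <= k + #|A|].
Proof.
move=> dX1 fX1 X10 szX1 dU arcs; have [sX1 _ _ _] := dX1.
split; rewrite ?size_map //; first exact: dpath_decomp_on_setU dX1 dU X10 arcs.
  exact: fresh_bags_setU sX1 dU fX1.
move=> _ /mapP[B /szX1 szB ->]; apply: leq_trans (leq_card_setU B A) _.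
by rewrite leq_add2r.
Qed.

Lemma cotree_dpd_spec t : uniq (leaves t) ->
  [/\ dpath_decomp_on (tarc t) (leaf_set t) (cotree_dpd t), fresh_bags (cotree_dpd t),
      0 < size (cotree_dpd t) & forall B, B \in cotree_dpd t -> #|B| <= (cotree_width t).+1].
Proof.
elim: t => [v _|o l IHl r IHr /uniq_leaves_node[ul ur dU]].
  split=> [||//|B]; last by rewrite inE => /eqP->; rewrite cards1.
    split=> [B|w|//|w i j k ij jk /= k1] /=.
    - by rewrite inE => /eqP->; apply/subsetP => w; rewrite !inE.
    - by rewrite !inE => /eqP->; exists 0; rewrite ?inE.
    - by have -> : j = k by lia.
  by case=> // _; exists v; rewrite ?inE.
have [dX1 fX1 X10 szX1] := IHl ul; have [sX1 _ _ _] := dX1.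
have [dX2 fX2 X20 szX2] := IHr ur; have [sX2 _ _ _] := dX2.
rewrite leaf_set_node; case: o; rewrite /= ?size_cat ?addn_gt0 ?X10 //.
1,3: split=> //; [ apply: dpath_decomp_on_cat dX1 dX2 dU _ => u v /or3P[];
                    by [constructor 1 | constructor 2 | constructor 3; rewrite !inE]
                 | exact: fresh_bags_cat sX1 sX2 dU fX1 fX2
                 | move=> B; rewrite mem_cat => /orP[/szX1|/szX2] szB;
                     by rewrite (leq_trans szB) // ltnS ?leq_maxl ?leq_maxr ].
case: ifP => [le_lr|/negbT]; last rewrite -ltnNge => lt_rl.
  rewrite (minn_idPl le_lr) -addSn -(card_leaf_set ur).
  by apply: dpd_bags_setU dX1 fX1 X10 szX1 dU _ => u v /tarc_series_side.
rewrite (minn_idPr (ltnW lt_rl)) -addSn -(card_leaf_set ul) setUC.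
rewrite disjoint_sym in dU.
apply: dpd_bags_setU dX2 fX2 X20 szX2 dU _ => u v uv.
by apply: tarc_series_side; rewrite tarc_seriesC.
Qed.

End CotreeDecomposition.

Definition succ_ord n : rel 'I_n := fun i j => val j == (val i).+1.
Arguments succ_ord : clear implicits.

Lemma connect_succ_ord n (i j : 'I_n) : connect (succ_ord n) i j = (i <= j).
Proof.
apply/idP/idP => [/connectP[p ip ->]|].
  by elim: p i ip => [|c p IHp] i //= /andP[/eqP ci /IHp]; rewrite ci; apply: ltnW.
move=> ij; have [d jd] : exists d, val j = i + d by exists (j - i); rewrite subnKC.
elim: d j ij jd => [|d IHd] j ij jd.
  by rewrite (_ : j = i) ?connect0 //; apply: val_inj; rewrite /= jd addn0.
have jn : i + d < n by rewrite (leq_ltn_trans _ (ltn_ord j)) // jd addnS.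
apply: connect_trans (IHd (Ordinal jn) (leq_addr _ _) erefl) (connect1 _).
by rewrite /succ_ord /= jd addnS.
Qed.

Lemma out_tree_succ_ord n : 0 < n -> out_tree (succ_ord n).
Proof.
move=> n0; exists (Ordinal n0); split=> [//|j j0|j]; last by rewrite connect_succ_ord.
have jn : j.-1 < n by rewrite (leq_ltn_trans (leq_pred _) (ltn_ord j)).
have j1 : val j = j.-1.+1.
  by rewrite prednK // lt0n; apply: contraNneq j0 => jz; apply/eqP/val_inj.
exists (Ordinal jn); split=> [|i /eqP ji]; first by rewrite /succ_ord /= -j1.
by apply: val_inj; rewrite /= j1 ji.
Qed.

Section TreeOfPath.

Context {V : finType}.
Variables (E : rel V) (X : seq {set V}).
Hypotheses (dX : dpath_decomp_on E setT X) (fX : fresh_bags X) (X0 : 0 < size X).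

Definition first_bag v := find (fun B : {set V} => v \in B) X.

Lemma first_bag_lt v : first_bag v < size X.
Proof.
have [_ cover _ _] := dX; have [i iX vi] := cover v (in_setT v).
by rewrite /first_bag -has_find; apply/hasP; exists (nth set0 X i); rewrite ?mem_nth.
Qed.

Lemma mem_first_bag v : v \in nth set0 X (first_bag v).
Proof. by have := first_bag_lt v; rewrite /first_bag -has_find; apply: nth_find. Qed.

Lemma first_bag_min v i : v \in nth set0 X i -> first_bag v <= i.
Proof. by rewrite leqNgt; apply: contraTN => /(before_find set0) /= ->. Qed.

Definition path_tree_W (i : 'I_(size X)) : {set V} := [set v | first_bag v == i].

Definition path_tree_X (i j : 'I_(size X)) : {set V} := nth set0 X i :&: nth set0 X j.

Lemma subtree_path_tree c v :
  (v \in subtree_vertices (succ_ord _) path_tree_W c) = (c <= first_bag v).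
Proof.
apply/bigcupP/idP => [[r]|cv]; first by rewrite connect_succ_ord inE => cr /eqP ->.
by exists (Ordinal (first_bag_lt v)); rewrite ?connect_succ_ord ?inE.
Qed.

(* A walk that leaves the vertices first seen at bag [c] or later must use an
   arc back to an earlier vertex, which then lies in both bags [a] and [c]. *)
Lemma path_tree_normal (a c : 'I_(size X)) : succ_ord _ a c ->
  Z_normal E (path_tree_X a c) (subtree_vertices (succ_ord _) path_tree_W c).
Proof.
set S := subtree_vertices _ _ c; have [_ _ arcs cons] := dX; move=> /eqP ca.
have arc u w : E u w -> u \notin path_tree_X a c -> w \notin path_tree_X a c ->
    u \in S -> w \in S.
  rewrite !subtree_path_tree => uw _ wZ cu; rewrite leqNgt; apply: contra wZ => wa.
  have [i [j [ij jX ui wj]]] := arcs u w uw.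
  have fw := mem_first_bag w; have cj := leq_trans cu (leq_trans (first_bag_min ui) ij).
  have fa : first_bag w <= a by rewrite -ltnS -ca.
  have aj : a <= j by rewrite (leq_trans (leqnSn a)) // -ca.
  by rewrite inE (cons w _ a j fa aj jX fw wj) (cons w _ c j (ltnW wa) cj jX fw wj).
by move=> x p xp pZ xS _; apply: path_invariant arc xp pZ xS.
Qed.

Lemma path_tree_decomp : is_dtree_decomp E (succ_ord _) path_tree_X path_tree_W.
Proof.
split=> [|r|r r' rr'|v|]; first exact: out_tree_succ_ord.
- have [v vr vNj] := fX (ltn_ord r); apply/set0Pn; exists v; rewrite inE eqn_leq first_bag_min //=.
  by rewrite leqNgt; apply: contraL (mem_first_bag v) => /vNj.
- rewrite -setI_eq0; apply/eqP/setP => v; rewrite !inE.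
  by apply: contraNF rr' => /andP[/eqP fr /eqP fr']; apply/eqP/val_inj; rewrite /= -fr -fr'.
- by exists (Ordinal (first_bag_lt v)); rewrite inE.
exact: path_tree_normal.
Qed.

Lemma path_tree_bag r : dtd_bag (succ_ord _) path_tree_X path_tree_W r \subset nth set0 X r.
Proof.
apply/subsetP => v /setUP[|/bigcupP[a _ /bigcupP[c /andP[_ /orP[]] /eqP <-]]].
- by rewrite inE => /eqP <-; apply: mem_first_bag.
- by case/setIP.
- by case/setIP.
Qed.

Lemma path_tree_width : dtd_width (succ_ord _) path_tree_X path_tree_W <= dpd_width X.
Proof.
rewrite /dtd_width /dpd_width -!subn1 leq_sub2r //; apply/bigmax_leqP => r _.
apply: leq_trans (subset_leq_card (path_tree_bag r)) _.
exact: leq_bigmax_seq (mem_nth set0 (ltn_ord r)) _.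
Qed.

End TreeOfPath.

Lemma dpd_width_le (V : finType) (X : seq {set V}) k :
  (forall B, B \in X -> #|B| <= k.+1) -> dpd_width X <= k.
Proof. by rewrite /dpd_width -subn1 leq_subLR add1n => szX; apply/bigmax_leqP_seq => B /szX. Qed.

Lemma dpw_is_haven (V : finType) (E : rel V) k b X :
  haven E setT k.+1 b -> is_dpath_decomp E X -> dpd_width X <= k -> dpw_is E k.
Proof.
move=> H dX wX; split=> [|Y dY]; last exact: haven_dpd_width H dY.
by exists X => //; apply/eqP; rewrite eqn_leq wX (haven_dpd_width H dX).
Qed.

Lemma dtw_is_haven (V VT : finType) (E : rel V) (ET : rel VT) X W k b :
  haven E setT k.+1 b -> is_dtree_decomp E ET X W -> dtd_width ET X W <= k -> dtw_is E k.
Proof.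
move=> H dT wT; split=> [|VT' ET' X' W' dT']; last exact: haven_dtd_width H dT'.
by exists VT, ET, X, W; split=> //; apply/eqP; rewrite eqn_leq wT (haven_dtd_width H dT).
Qed.

Theorem theorem5p4 :
  exists (leaf0 : seq nat) (step : dcop -> seq aexp) (ipw itw : nat),
    forall (V : finType) (E : rel V) (t : dctree V),
      is_binary_dicotree E t ->
      dpw_is E (nth 0 (run_alg leaf0 step t) ipw) /\
      dtw_is E (nth 0 (run_alg leaf0 step t) itw).
Proof.
exists width_leaf, width_step, 0, 0 => V E t [uniq_t all_t Et].
rewrite run_width_algE /=.
have leaf_setT : leaf_set t = setT by apply/setP => v; rewrite !inE all_t.
have [b Hb] := cotree_haven uniq_t; rewrite leaf_setT in Hb.
have tarc_E : subrel (tarc t) E by move=> u v; rewrite Et.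
have E_tarc : subrel E (tarc t) by move=> u v; rewrite Et.
have HE := haven_restrict (subxx _) tarc_E Hb.
have [dX fX X0 szX] := cotree_dpd_spec uniq_t; rewrite leaf_setT in dX.
have {}dX := dpath_decomp_on_subrel E_tarc dX.
have wX := dpd_width_le szX.
split; first exact: dpw_is_haven HE (dpath_decomp_onT dX) wX.
exact: dtw_is_haven HE (path_tree_decomp dX fX X0) (leq_trans (path_tree_width dX) wX).
Qed.
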